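(* For every $L\le n^2$, let $N(L)$ be the number of distinct $n$-operators $f:\{0,1\}^n\to\{0,1\}^n$ computable by a circuit with at most $L$ wires. Then $$\log_2 N(L)\le 2n^2\,4^{L/n}+n\,2^{n-1}+O(n^2\log_2 n),$$ where the constant in the $O(\cdot)$ term is absolute.
   Context: An $n$-operator is a map $f=(f_1,\dots,f_n):\{0,1\}^n\to\{0,1\}^n$. A (general) circuit is a directed acyclic graph with $n$ input nodes $x_1,\dots,x_n$ (of fanin $0$) and $n$ designated output nodes $y_1,\dots,y_n$. Each non-input node may compute an arbitrary boolean function of the values at its in-neighbours, and there is no restriction on fanin or fanout. The circuit computes $f$ if, for every $i$, the function computed at $y_i$ is $f_i$. The number of wires of a circuit is its number of edges. *)

From mathcomp Require Import all_boot.
From Stdlib Require Import Reals ClassicalEpsilon.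
Set Implicit Arguments. Unset Strict Implicit. Unset Printing Implicit Defensive.

(* Nodes are 'I_(n + s); nodes 0..n-1 are the inputs x_1..x_n.
   The DAG is given in topologically sorted form: every in-neighbour of a
   node has a smaller index (any finite DAG admits such a numbering).
   Each node i has an in-neighbour set [cin i] and a gate function
   [cgate i]; the node computes [cgate i] applied to the values at its
   in-neighbours only (values at other nodes are masked to false), so
   [cgate i] is an arbitrary boolean function of the in-neighbours' values. *)
Record circuit (n s : nat) := Circuit {
  cin   : 'I_(n + s) -> {set 'I_(n + s)};
  cgate : 'I_(n + s) -> {ffun 'I_(n + s) -> bool} -> bool;
  cout  : 'I_n -> 'I_(n + s)
}.

Definition wf_circuit n s (C : circuit n s) : Prop :=
  (forall i : 'I_(n + s), (i < n)%N -> cin C i = set0) /\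
  (forall i j : 'I_(n + s), j \in cin C i -> (j < i)%N).

Definition wires n s (C : circuit n s) : nat :=
  \sum_(i : 'I_(n + s)) #|cin C i|.

Definition gate_out n s (C : circuit n s) (i : 'I_(n + s))
    (v : {ffun 'I_(n + s) -> bool}) : bool :=
  cgate C i [ffun j => if j \in cin C i then v j else false].

Fixpoint eval_upto n s (C : circuit n s) (x : {ffun 'I_n -> bool}) (k : nat)
    : {ffun 'I_(n + s) -> bool} :=
  match k with
  | 0 => [ffun i : 'I_(n + s) =>
            match insub (nat_of_ord i) : option 'I_n with
            | Some i' => x i'
            | None => false
            end]
  | k'.+1 =>
      let v := eval_upto C x k' in
      [ffun i => if (nat_of_ord i == k') && (n <= i)%N then gate_out C i v
                 else v i]
  end.

Definition eval_circuit n s (C : circuit n s) (x : {ffun 'I_n -> bool})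
    : {ffun 'I_(n + s) -> bool} := eval_upto C x (n + s).

Definition operator (n : nat) := {ffun {ffun 'I_n -> bool} -> {ffun 'I_n -> bool}}.

Definition circuit_op n s (C : circuit n s) : operator n :=
  [ffun x => [ffun i => eval_circuit C x (cout C i)]].

Definition computable_with (n L : nat) (f : operator n) : Prop :=
  exists (s : nat) (C : circuit n s),
    wf_circuit C /\ (wires C <= L)%N /\ circuit_op C = f.

Definition computable_withb (n L : nat) (f : operator n) : bool :=
  if excluded_middle_informative (computable_with L f) then true else false.

Definition Nops (n L : nat) : nat := #|[set f : operator n | computable_withb L f]|.

Definition log2R (x : R) : R := (ln x / ln 2)%R.

(* Renumber the relevant nodes of a circuit with at most L wires (inputs, wire
   tails and outputs: at most 2n + L of them) in topological order, list its
   wires, and describe each gate of fan-in d either by its truth table over its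
   in-neighbours (2^d bits, when d < n) or by the function of the inputs it
   computes (2^n bits).  Such a code determines the operator.  Since
   (2^d - 1)/d is nondecreasing, min (2^d) (2^n) <= 1 + d 2^n / n, so the tables
   take at most 2n + L + 1 + L 2^n / n bits, i.e. n 2^(n-1) + O(n^2) when
   2L <= n^2, and the rest of the code leaves 2^O(n^2 log n) choices.  When
   n^2 <= 2L, or n = 1, the trivial bound n 2^n is below 2 n^2 4^(L/n). *)

From Stdlib Require Import ClassicalEpsilon.
From mathcomp Require Import all_boot zify.
Set Implicit Arguments. Unset Strict Implicit. Unset Printing Implicit Defensive.

Lemma card_set_pair_fibers (A B : finType) (X : {set A * B}) :
  #|X| = \sum_(a : A) #|[set b | (a, b) \in X]|.
Proof.
rewrite -sum1_card big_mkcond /=.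
rewrite (eq_bigr (fun p => (fun a b => if (a, b) \in X then 1 else 0) p.1 p.2)); last by case.
rewrite -(pair_bigA _ (fun a b => if (a, b) \in X then 1 else 0)) /=.
symmetry; under eq_bigr => a _ do rewrite -sum1_card big_mkcond /=.
by apply: eq_bigr => a _; apply: eq_bigr => b _; rewrite inE.
Qed.

Lemma card_set_sum_split (A B : finType) (X : {set A + B}) :
  #|X| = #|[set a | inl a \in X]| + #|[set b | inr b \in X]|.
Proof.
rewrite -!sum1_card !big_mkcond /= big_sumType /=.
by congr (_ + _); rewrite [RHS]big_mkcond; apply: eq_bigr => a _; rewrite inE.
Qed.

Lemma card_bigcup_le (I T : finType) (P : pred I) (F : I -> {set T}) :
  #|\bigcup_(i | P i) F i| <= \sum_(i | P i) #|F i|.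
Proof.
elim/big_rec2: _ => [|i k U _ le_Uk]; first by rewrite cards0.
by rewrite (leq_trans (leq_card_setU _ _).1) ?leq_add2l.
Qed.

(* Equivalently, [(2 ^ d - 1) / d] is nondecreasing in [d]. *)
Lemma exp2_chord n d : d <= n -> n * 2 ^ d + d <= d * 2 ^ n + n.
Proof.
move=> /subnKC <-; elim: (n - d) => [|k IHk]; first by rewrite addn0.
have le_2d : 2 ^ d <= d * 2 ^ (d + k) + 1.
  case: d {IHk} => [|d]; first by rewrite expn0.
  apply: leq_trans (leq_addr _ _); apply: leq_trans (leq_pmull _ (ltn0Sn d)) _.
  by rewrite leq_mul // leq_exp2l // leq_addr.
rewrite addnS expnS; nia.
Qed.

Section Evaluation.
Variables (n s : nat) (C : circuit n s) (x : {ffun 'I_n -> bool}).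

Lemma eval_upto_unreached k (i : 'I_(n + s)) :
  k <= i -> eval_upto C x k i = eval_upto C x 0 i.
Proof.
elim: k => [//|k IHk] le_ki /=; rewrite ffunE.
by rewrite (gtn_eqF le_ki) IHk // ltnW.
Qed.

Lemma eval_upto_frozen k (i : 'I_(n + s)) :
  i < k -> eval_upto C x k i = eval_upto C x i.+1 i.
Proof.
elim: k => [//|k IHk]; rewrite ltnS leq_eqVlt => /orP[/eqP -> //| lt_ik] /=.
by rewrite ffunE (ltn_eqF lt_ik) IHk.
Qed.

Lemma gate_out_in (i : 'I_(n + s)) (v v' : {ffun 'I_(n + s) -> bool}) :
  {in cin C i, v =1 v'} -> gate_out C i v = gate_out C i v'.
Proof.
move=> eq_vv'; rewrite /gate_out; congr (cgate C i _); apply/ffunP => j.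
by rewrite !ffunE; case: ifP => // /eq_vv'.
Qed.

Lemma eval_circuit_input (i : 'I_(n + s)) (lt_in : i < n) :
  eval_circuit C x i = x (Ordinal lt_in).
Proof.
rewrite /eval_circuit (eval_upto_frozen (ltn_ord i)) /= ffunE eqxx leqNgt lt_in /=.
by rewrite eval_upto_unreached // ffunE insubT.
Qed.

Hypothesis wfC : wf_circuit C.

Lemma eval_circuit_gate (i : 'I_(n + s)) :
  n <= i -> eval_circuit C x i = gate_out C i (eval_circuit C x).
Proof.
move=> le_ni; rewrite /eval_circuit (eval_upto_frozen (ltn_ord i)) /= ffunE eqxx le_ni /=.
apply: gate_out_in => j /(wfC.2 _ _) lt_ji.
by rewrite (eval_upto_frozen lt_ji) (eval_upto_frozen (ltn_ord j)).
Qed.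

End Evaluation.

Section Codes.
Variables n L : nat.

(* Room for the at most L + n relevant gates; the extra slot makes the node type
   visibly inhabited. *)
Local Notation s := (n + L).+1.
Local Notation node := 'I_(n + s).

(* [(k, inl P)] states that gate [k] outputs 1 when [P] is the set of its
   in-neighbours carrying 1; [(k, inr X)] that node [k] outputs 1 on the input
   whose set of 1-coordinates is [X]. *)
Definition entry := (node * ({set node} + {set 'I_n}))%type.
Definition edge_list := {ffun 'I_L -> option (node * node)}.
Definition code := ({ffun 'I_n -> node} * edge_list * {set entry})%type.

Definition edges (t : edge_list) : {set node * node} := [set e | Some e \in codom t].
Definition in_nbrs (t : edge_list) (k : node) : {set node} := [set j | (k, j) \in edges t].

Definition admissible (t : edge_list) : {set entry} :=
  [set p : entry | match p.2 with
                   | inl P => (#|in_nbrs t p.1| < n) && (P \subset in_nbrs t p.1)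
                   | inr _ => n <= #|in_nbrs t p.1|
                   end].

Definition code_ok (c : code) : bool := c.2 \subset admissible c.1.2.

Definition code_circuit (c : code) : circuit n s :=
  let: (out, t, T) := c in
  @Circuit n s
    (fun k => if n <= k then
                if #|in_nbrs t k| < n then in_nbrs t k else [set j : node | j < n]
              else set0)
    (fun k w => if #|in_nbrs t k| < n then (k, inl [set j in in_nbrs t k | w j]) \in T
                else (k, inr [set a | w (lshift s a)]) \in T)
    out.

Definition decode (c : code) : operator n := circuit_op (code_circuit c).

Lemma wf_code_circuit (c : code) :
  (forall k j, j \in in_nbrs c.1.2 k -> j < k) -> wf_circuit (code_circuit c).
Proof.
case: c => [[out t] T] /= back; split=> [k lt_kn | k j] /=; first by rewrite leqNgt lt_kn.
case: ifP => [le_nk|_]; last by rewrite inE.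
case: ifP => _; first exact: back.
by rewrite inE => /leq_trans; apply.
Qed.

Lemma gate_out_code_circuit (c : code) (k : node) (v : {ffun node -> bool}) :
  n <= k ->
  gate_out (code_circuit c) k v =
    if #|in_nbrs c.1.2 k| < n then (k, inl [set j in in_nbrs c.1.2 k | v j]) \in c.2
    else (k, inr [set a | v (lshift s a)]) \in c.2.
Proof.
case: c => [[out t] T] le_nk; rewrite /gate_out /= le_nk.
case: ifP => deg_k; congr ((k, _) \in T); congr (_ _); apply/setP => j.
  by rewrite !inE ffunE deg_k !inE; case: (_ \in codom t).
by rewrite inE ffunE deg_k !inE /= ltn_ord.
Qed.

Lemma card_edges (t : edge_list) : #|edges t| <= L.
Proof.
pose e0 : node * node := (rshift n ord0, rshift n ord0).
have sub : edges t \subset [set odflt e0 (t i) | i : 'I_L].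
  by apply/subsetP => e; rewrite inE => /codomP [i ti]; apply/imsetP; exists i; rewrite -?ti.
by rewrite (leq_trans (subset_leq_card sub)) // (leq_trans (leq_imset_card _ _)) ?card_ord.
Qed.

Lemma exists_edge_list (E : {set node * node}) : #|E| <= L -> exists t, edges t = E.
Proof.
move=> le_EL; pose es := [seq Some e | e <- enum E].
exists [ffun i : 'I_L => nth None es i]; apply/setP => e; rewrite inE.
apply/codomP/idP => [[i] | Ee].
  rewrite ffunE; case: (ltnP i (size es)) => [lt_i | ?]; last by rewrite nth_default.
  move: lt_i; rewrite size_map => lt_i; rewrite (nth_map e) // => -[->].
  by rewrite -mem_enum mem_nth.
have lt_iL : index e (enum E) < L by rewrite (leq_trans _ le_EL) // cardE index_mem mem_enum.
exists (Ordinal lt_iL); rewrite ffunE /= (nth_map e) ?nth_index ?mem_enum //.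
by rewrite index_mem mem_enum.
Qed.

Lemma card_admissible (t : edge_list) :
  #|admissible t| =
    \sum_k (if #|in_nbrs t k| < n then 2 ^ #|in_nbrs t k| else 2 ^ n).
Proof.
rewrite card_set_pair_fibers; apply: eq_bigr => k _; rewrite card_set_sum_split.
set inl_k := [set P | _]; set inr_k := [set X | _].
case: ifP => deg_k.
  have -> : inl_k = powerset (in_nbrs t k) by apply/setP => P; rewrite powersetE !inE /= deg_k.
  have -> : inr_k = set0 by apply/setP => X; rewrite !inE /= leqNgt deg_k.
  by rewrite card_powerset cards0 addn0.
have -> : inl_k = set0 by apply/setP => P; rewrite !inE /= deg_k.
have -> : inr_k = setT by apply/setP => X; rewrite !inE /= leqNgt deg_k.
by rewrite cards0 -powersetT card_powerset cardsT card_ord.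
Qed.

Lemma admissible_bound (t : edge_list) :
  n * #|admissible t| <= n * (n + s) + L * 2 ^ n.
Proof.
rewrite card_admissible big_distrr /=.
apply: (@leq_trans (\sum_k (n + #|in_nbrs t k| * 2 ^ n))).
  apply: leq_sum => k _; case: ltnP => [deg_lt | deg_ge].
    by rewrite [X in _ <= X]addnC (leq_trans _ (exp2_chord (ltnW deg_lt))) ?leq_addr.
  by rewrite (leq_trans _ (leq_addl _ _)) // leq_mul.
rewrite big_split sum_nat_const card_ord /= -big_distrl /= -card_set_pair_fibers.
by rewrite mulnC leq_add2l leq_mul // card_edges.
Qed.

Lemma card_code_ok K :
  (forall t, #|admissible t| <= K) ->
  #|[set c : code | code_ok c]| <= (n + s) ^ n * ((n + s) * (n + s)).+1 ^ L * 2 ^ K.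
Proof.
move=> le_admK; rewrite card_set_pair_fibers.
apply: (@leq_trans (\sum_(ot : {ffun 'I_n -> node} * edge_list) 2 ^ K)).
  apply: leq_sum => -[out t] _.
  have -> : [set T | ((out, t), T) \in [set c : code | code_ok c]] = powerset (admissible t).
    by apply/setP => T; rewrite powersetE !inE.
  by rewrite card_powerset leq_exp2l.
by rewrite sum_nat_const card_prod !card_ffun card_option card_prod !card_ord.
Qed.

Section Embedding.
Variables (m : nat) (C : circuit n m).

Definition relevant (i : 'I_(n + m)) : bool :=
  [|| i < n, i \in \bigcup_k cin C k | i \in [set cout C o | o : 'I_n]].

Definition relevant_gates : {set 'I_(n + m)} := [set i : 'I_(n + m) | n <= i & relevant i].

Definition rank (i : 'I_(n + m)) : nat :=
  if i < n then val i else n + #|[set j in relevant_gates | j < i]|.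

Definition slot (i : 'I_(n + m)) : node := insubd (rshift n ord0) (rank i).

Lemma relevant_cin (i j : 'I_(n + m)) : j \in cin C i -> relevant j.
Proof. by move=> j_in; apply/or3P; apply: Or32; apply/bigcupP; exists i. Qed.

Lemma relevant_out o : relevant (cout C o).
Proof. by apply/or3P; apply: Or33; apply: imset_f. Qed.

Lemma card_relevant_gates : #|relevant_gates| <= wires C + n.
Proof.
have sub : relevant_gates \subset (\bigcup_k cin C k) :|: [set cout C o | o : 'I_n].
  apply/subsetP => i; rewrite !inE => /andP[le_ni /or3P[lt_in|->|->]]; rewrite ?orbT //.
  by rewrite ltnNge le_ni in lt_in.
apply: leq_trans (subset_leq_card sub) _; apply: leq_trans (leq_card_setU _ _).1 _.
by rewrite leq_add ?card_bigcup_le // (leq_trans (leq_imset_card _ _)) ?card_ord.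
Qed.

Lemma rank_input (i : 'I_(n + m)) : i < n -> rank i = i.
Proof. by rewrite /rank => ->. Qed.

Lemma rank_gate (i : 'I_(n + m)) : n <= i -> n <= rank i.
Proof. by rewrite /rank ltnNge => ->; rewrite leq_addr. Qed.

Lemma rank_mono (i i' : 'I_(n + m)) : relevant i -> i < i' -> rank i < rank i'.
Proof.
rewrite /rank => rel_i lt_ii'; case: ifP => [lt_in | ge_in].
  by case: ifP => // _; apply: leq_trans lt_in (leq_addr _ _).
rewrite ifN ?ltn_add2l; last by rewrite -leqNgt (leq_trans _ (ltnW lt_ii')) // leqNgt ge_in.
apply: proper_card; apply/properP; split.
  by apply/subsetP => j; rewrite !inE => /andP[-> /ltn_trans]; apply.
by exists i; rewrite !inE ?ltnn ?andbF // lt_ii' leqNgt ge_in rel_i.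
Qed.

Hypothesis wires_C : wires C <= L.

Lemma rank_lt (i : 'I_(n + m)) : rank i < n + s.
Proof.
rewrite /rank; case: ifP => [lt_in | _]; first by rewrite ltn_addr.
have sub : [set j in relevant_gates | j < i] \subset relevant_gates.
  by apply/subsetP => j; rewrite inE => /andP[].
have := subset_leq_card sub; have := card_relevant_gates; lia.
Qed.

Lemma val_slot (i : 'I_(n + m)) : val (slot i) = rank i.
Proof. by rewrite val_insubd rank_lt. Qed.

Lemma slot_lt (i i' : 'I_(n + m)) : relevant i -> i < i' -> slot i < slot i'.
Proof. by rewrite !val_slot; apply: rank_mono. Qed.

Lemma slot_inj : {in relevant &, injective slot}.
Proof.
move=> i i' rel_i rel_i' eq_slot; apply/val_inj/eqP.
by case: ltngtP => // [/(slot_lt rel_i) | /(slot_lt rel_i')]; rewrite eq_slot ltnn.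
Qed.

Definition slot_edges : {set node * node} :=
  \bigcup_(i | relevant i) [set (slot i, slot j) | j in cin C i].

Lemma card_slot_edges : #|slot_edges| <= wires C.
Proof.
rewrite (leq_trans (card_bigcup_le _ _)) // /wires big_mkcond.
by apply: leq_sum => i _; case: ifP => // _; apply: leq_imset_card.
Qed.

Definition entry_holds (i : 'I_(n + m)) (e : {set node} + {set 'I_n}) : bool :=
  match e with
  | inl P => cgate C i [ffun j => if j \in cin C i then slot j \in P else false]
  | inr X => eval_circuit C [ffun a => a \in X] i
  end.

Definition gate_table : {set entry} :=
  [set p : entry | [exists i, [&& relevant i, slot i == p.1 & entry_holds i p.2]]].

Lemma mem_gate_table (i : 'I_(n + m)) e :
  relevant i -> ((slot i, e) \in gate_table) = entry_holds i e.
Proof.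
move=> rel_i; rewrite inE; apply/existsP/idP => [[i' /and3P[rel_i' /eqP eq_slot]] | holds].
  by rewrite (slot_inj rel_i' rel_i eq_slot).
by exists i; rewrite rel_i eqxx.
Qed.

Variable t : edge_list.
Hypothesis edges_t : edges t = slot_edges.

Lemma in_nbrs_slot (i : 'I_(n + m)) : relevant i -> in_nbrs t (slot i) = slot @: cin C i.
Proof.
move=> rel_i; apply/setP => k; rewrite inE edges_t; apply/bigcupP/imsetP.
  case=> i' rel_i' /imsetP[j j_in [/(slot_inj rel_i rel_i') eq_ii' ->]].
  by exists j; rewrite // eq_ii'.
by case=> j j_in ->; exists i => //; apply: imset_f.
Qed.

Hypothesis wfC : wf_circuit C.

Lemma in_nbrs_lt (k j : node) : j \in in_nbrs t k -> j < k.
Proof.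
rewrite inE edges_t => /bigcupP[i _ /imsetP[j' j'_in [-> ->]]].
exact: slot_lt (relevant_cin j'_in) (wfC.2 _ _ j'_in).
Qed.

Definition embedding : code := ([ffun o => slot (cout C o)], t, gate_table :&: admissible t).

Lemma eval_embedding x (i : 'I_(n + m)) :
  relevant i -> eval_circuit (code_circuit embedding) x (slot i) = eval_circuit C x i.
Proof.
have wfC' : wf_circuit (code_circuit embedding) by apply: wf_code_circuit; apply: in_nbrs_lt.
suff IH k : forall i : 'I_(n + m), i < k -> relevant i ->
    eval_circuit (code_circuit embedding) x (slot i) = eval_circuit C x i.
  by move=> rel_i; apply: (IH i.+1).
elim: k => // k IHk {}i lt_ik rel_i.
have IHcin j : j \in cin C i -> eval_circuit (code_circuit embedding) x (slot j) = eval_circuit C x j.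
  move=> j_in; apply: IHk (relevant_cin j_in).
  by apply: leq_trans (wfC.2 _ _ j_in) _; rewrite -ltnS.
case: (ltnP i n) => [lt_in | le_ni].
  have lt_slot : slot i < n by rewrite val_slot rank_input.
  rewrite (eval_circuit_input _ x lt_slot) (eval_circuit_input _ x lt_in).
  by congr (fun_of_fin x _); apply: val_inj; rewrite /= val_slot rank_input.
have le_n_slot : n <= slot i by rewrite val_slot rank_gate.
have deg : #|in_nbrs t (slot i)| = #|cin C i|.
  by rewrite in_nbrs_slot // card_in_imset //; apply: sub_in2 slot_inj => j; apply: relevant_cin.
rewrite (eval_circuit_gate x wfC' le_n_slot) gate_out_code_circuit // [_.1.2]/= [_.2]/= deg.
case: ltnP => deg_i; rewrite in_setI mem_gate_table // inE.
  set P := [set j in _ | _].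
  rewrite -[entry_holds _ _]/(cgate C i _).
  rewrite -[X in _ && X]/((#|in_nbrs t (slot i)| < n) && (P \subset in_nbrs t (slot i))).
  have -> : P \subset in_nbrs t (slot i) by apply/subsetP => j; rewrite inE => /andP[].
  rewrite deg deg_i !andbT (eval_circuit_gate x wfC le_ni); congr (cgate C i _).
  apply/ffunP => j; rewrite !ffunE; case: ifP => // j_in.
  by rewrite inE in_nbrs_slot // imset_f //= IHcin.
rewrite -[entry_holds _ _]/(eval_circuit C _ i).
rewrite -[X in _ && X]/(n <= #|in_nbrs t (slot i)|) deg deg_i andbT.
congr (eval_circuit C _ i); apply/ffunP => a.
have lt_an : lshift s a < n := ltn_ord a.
by rewrite !ffunE inE (eval_circuit_input _ x lt_an); congr (fun_of_fin x _); apply: val_inj.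
Qed.

Lemma decode_embedding : decode embedding = circuit_op C.
Proof.
apply/ffunP => x; apply/ffunP => o; rewrite /decode /circuit_op !ffunE.
by rewrite -[cout _ o]/([ffun o => slot (cout C o)] o) ffunE eval_embedding ?relevant_out.
Qed.
End Embedding.

Lemma Nops_le_card_code_ok : Nops n L <= #|[set c : code | code_ok c]|.
Proof.
apply: leq_trans (leq_imset_card decode _); apply: subset_leq_card.
apply/subsetP => f; rewrite inE /computable_withb.
case: excluded_middle_informative => // -[m [C [wfC [wires_C opC]]]] _.
have [t edges_t] := exists_edge_list (leq_trans (card_slot_edges C) wires_C).
apply/imsetP; exists (embedding C t); first by rewrite inE /code_ok subsetIr.
by rewrite (decode_embedding wires_C edges_t wfC).
Qed.

End Codes.

Lemma leq_exp_base m1 m2 e : m1 <= m2 -> m1 ^ e <= m2 ^ e.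
Proof. by move=> le_m; elim: e => [//|e IHe]; rewrite !expnS leq_mul. Qed.

Lemma Nops_le_exp n L :
  1 < n -> 2 * L <= n * n -> Nops n L <= 2 ^ (n * 2 ^ n.-1) * n ^ (16 * n ^ 2).
Proof.
move=> n_gt1 le_2L; have n_gt0 : 0 < n by apply: ltnW.
pose M := n + (n + L).+1; pose A := n * 2 ^ n.-1.
have le_adm (t : edge_list n L) : #|admissible t| <= M + A.
  rewrite -(leq_pmul2l n_gt0) (leq_trans (admissible_bound t)) //.
  have exp2n : 2 ^ n = 2 * 2 ^ n.-1 by rewrite -expnS prednK.
  by rewrite /M /A exp2n; nia.
apply: leq_trans (Nops_le_card_code_ok n L) _; apply: leq_trans (card_code_ok le_adm) _.
rewrite expnD mulnA [X in _ <= X]mulnC leq_mul //.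
have lt_Mn4 : M < n ^ 4 by rewrite /M; nia.
have le_MMn8 : (M * M).+1 <= n ^ 8.
  by apply: (@leq_trans (M.+1 * M.+1)); [nia | rewrite -[8]/(4 + 4) expnD leq_mul].
apply: (@leq_trans ((n ^ 4) ^ n * (n ^ 8) ^ L * n ^ M)).
  by rewrite !leq_mul ?leq_exp_base ?(ltnW lt_Mn4).
by rewrite -!expnM -!expnD leq_pexp2l //; rewrite /M; nia.
Qed.

Lemma Nops_le_all n L : Nops n L <= 2 ^ (n * 2 ^ n).
Proof.
rewrite /Nops (leq_trans (max_card _)) // !card_ffun card_bool card_ord.
by rewrite -expnM.
Qed.

(* From here on, [^] on [nat] denotes [Nat.pow], hence the explicit [expn]. *)
From Stdlib Require Import Reals Lra Psatz.

Section Log2.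
Local Open Scope R_scope.

Lemma INR_expn (m k : nat) : INR (expn m k) = INR m ^ k.
Proof. by elim: k => [|k IHk] //; rewrite expnS -multE mult_INR IHk. Qed.

Lemma ln_le x y : 0 < x -> x <= y -> ln x <= ln y.
Proof. by move=> x_gt0 [lt_xy | <-]; [left; apply: ln_increasing | right]. Qed.

Lemma ln2_gt0 : 0 < ln 2.
Proof. by rewrite -ln_1; apply: ln_increasing; lra. Qed.

Lemma log2R_ge0 (m : nat) : (0 < m)%nat -> 0 <= log2R (INR m).
Proof.
move=> m_gt0; apply: Rmult_le_pos; last by left; apply/Rinv_0_lt_compat/ln2_gt0.
by rewrite -ln_1; apply: ln_le; [lra | apply: (le_INR 1); apply/leP].
Qed.

(* [ln 0 = 0] in Stdlib, so the bound also holds for [N = 0]. *)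
Lemma log2R_le_exp (N A B m : nat) :
  (0 < m)%nat -> (N <= expn 2 A * expn m B)%nat -> log2R (INR N) <= INR A + INR B * log2R (INR m).
Proof.
move=> m_gt0 le_N; have ln2_pos := ln2_gt0.
have m_pos : 0 < INR m by apply: (lt_INR 0); apply/ltP.
have := log2R_ge0 m_gt0; have := pos_INR A; have := pos_INR B.
case: N le_N => [_ | N le_N] A_ge0 B_ge0 log_m_ge0.
  rewrite {1}/log2R; have -> : ln (INR 0) = 0.
    by rewrite /ln; case: Rlt_dec => // lt00; case: (Rlt_irrefl _ lt00).
  by rewrite /Rdiv Rmult_0_l; nra.
have le_ln : ln (INR N.+1) <= INR A * ln 2 + INR B * ln (INR m).
  rewrite -!ln_pow -?ln_mult; try apply: pow_lt; try lra.
  apply: ln_le; first by apply: (lt_INR 0); apply/ltP.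
  have INR2 : INR 2 = 2 by simpl; lra.
  by rewrite -INR2 -!INR_expn -mult_INR multE; apply: le_INR; apply/leP.
rewrite /log2R; apply: (Rmult_le_reg_r (ln 2)) => //.
by rewrite Rmult_plus_distr_r /Rdiv !Rmult_assoc Rinv_l; lra.
Qed.

Lemma Rpower4_ge1 y : 0 <= y -> 1 <= Rpower 4 y.
Proof. by move=> y_ge0; rewrite -(Rpower_O 4); [apply: Rle_Rpower; lra | lra]. Qed.

Lemma pow2_le_Rpower4 (n L : nat) :
  (0 < n)%nat -> (n * n <= 2 * L)%nat -> 2 ^ n <= Rpower 4 (INR L / INR n).
Proof.
move=> n_gt0 le_n2; have n_pos : 0 < INR n by apply: (lt_INR 0); apply/ltP.
have le_n2R : INR n * INR n <= 2 * INR L.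
  by have := le_INR _ _ (elimT leP le_n2); rewrite -!multE !mult_INR.
rewrite -Rpower_pow; last lra.
have four : 4 = Rpower 2 (INR 2) by rewrite Rpower_pow /=; lra.
rewrite four Rpower_mult; apply: Rle_Rpower; first lra.
apply: (Rmult_le_reg_r (INR n)) => //.
by rewrite /Rdiv -Rmult_assoc Rmult_assoc Rinv_l; simpl INR; lra.
Qed.

Lemma INR_exp2 (k : nat) : INR (expn 2 k) = 2 ^ k.
Proof. by rewrite INR_expn; congr (_ ^ _); simpl; lra. Qed.

Lemma log2R_Nops_le_all n L : log2R (INR (Nops n L)) <= INR n * 2 ^ n.
Proof.
have := @log2R_le_exp (Nops n L) (n * expn 2 n) 0 1 (ltn0Sn 0).
by rewrite expn0 muln1 Nops_le_all -multE mult_INR INR_exp2 Rmult_0_l Rplus_0_r; apply.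
Qed.

Lemma log2R_Nops_le_exp n L :
  (1 < n)%nat -> (2 * L <= n * n)%nat ->
  log2R (INR (Nops n L)) <= INR n * 2 ^ n.-1 + 16 * (INR n ^ 2 * log2R (INR n)).
Proof.
move=> n_gt1 le_2L; have := log2R_le_exp (ltnW n_gt1) (Nops_le_exp n_gt1 le_2L).
have INR16 : INR 16 = 16 by simpl; lra.
have sqr_n : INR n ^ 2 = INR n * INR n by ring.
by rewrite -!multE !mult_INR INR_exp2 INR16 sqr_n Rmult_assoc.
Qed.

Lemma mul_exp2_le_Rpower4 (n L : nat) :
  (n = 1 \/ n * n <= 2 * L)%nat -> INR n * 2 ^ n <= 2 * INR n ^ 2 * Rpower 4 (INR L / INR n).
Proof.
case=> [-> | le_n2].
  have L_ge0 : 0 <= INR L / INR 1 by rewrite Rdiv_1_r; apply: pos_INR.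
  by have := Rpower4_ge1 L_ge0; simpl; nra.
have [-> | n_gt0] := posnP n; first by simpl; lra.
have n_ge1 : 1 <= INR n by apply: (le_INR 1); apply/leP.
have Rpower4_gt0 : 0 < Rpower 4 (INR L / INR n) by apply: exp_pos.
apply: (Rle_trans _ (INR n * Rpower 4 (INR L / INR n))).
  by apply: Rmult_le_compat_l (pow2_le_Rpower4 n_gt0 le_n2); lra.
have : 0 <= (2 * INR n ^ 2 - INR n) * Rpower 4 (INR L / INR n) by apply: Rmult_le_pos; nra.
lra.
Qed.

End Log2.

Theorem mainTheorem2 :
  exists C : R, forall n L : nat, (1 <= n)%N -> (L <= n * n)%N ->
    (log2R (INR (Nops n L))
     <= 2 * INR n ^ 2 * Rpower 4 (INR L / INR n)
        + INR n * 2 ^ (n - 1)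
        + C * (INR n ^ 2 * log2R (INR n)))%R.
Proof.
exists 16%R => n L n_ge1 _.
have log_n_ge0 := log2R_ge0 n_ge1.
have n_ge0 := pos_INR n.
have sqr_n_ge0 : (0 <= INR n ^ 2)%R by apply: pow_le.
have exp2_gt0 : (0 < 2 ^ (n - 1))%R by apply: pow_lt; lra.
have Rpower4_gt0 : (0 < Rpower 4 (INR L / INR n))%R by apply: exp_pos.
case: (boolP ((1 < n) && (2 * L <= n * n))) => [/andP[n_gt1 le_2L] | small_or_large].
  by have := log2R_Nops_le_exp n_gt1 le_2L; rewrite subn1; nra.
have : (n = 1 \/ n * n <= 2 * L)%N.
  move: small_or_large; rewrite negb_and -leqNgt -ltnNge => /orP[le_n1 | /ltnW]; last by right.
  by left; apply/eqP; rewrite eqn_leq le_n1.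
by move/mul_exp2_le_Rpower4; have := log2R_Nops_le_all n L; nra.
Qed.
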